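(* Let $G$ be a group, let $a,b\in G$, and let $K$ be a finite-index normal subgroup of $G$. Let $m=\deg_K(a)$ and $n=\deg_K(b)$. Suppose there exists a retraction $\rho:K\to\langle a^m\rangle$ (that is, a homomorphism $\rho:K\to\langle a^m\rangle$ restricting to the identity on $\langle a^m\rangle$) with the property that \[ \rho\big((b^{mn})^g\big)\neq a^{mn} \] for all $g\in G$. Then there exists a homomorphism $\tau$ from $G$ to a finite group such that $\tau(a)$ is not conjugate to $\tau(b)$.
   Context: For a finite-index subgroup $K$ of $G$ and $g\in G$, the degree $\deg_K(g)$ is the minimal positive integer $n$ such that $g^n\in K$. For group elements $g,h$, the notation $g^h$ means $h^{-1}gh$. *)

From HB Require Import structures.
From mathcomp Require Import all_boot all_algebra all_fingroup.
Set Implicit Arguments. Unset Strict Implicit. Unset Printing Implicit Defensive.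

(* An arbitrary (possibly infinite) group is a [groupType] from
   mathcomp/boot/monoid.v.  Subsets of G are predicates [G -> Prop]. *)

Local Open Scope group_scope.

Definition zpowg (G : groupType) (x : G) (z : int) : G :=
  match z with Posz n => x ^+ n | Negz n => (x ^+ n.+1)^-1 end.

Definition cyc (G : groupType) (x : G) : G -> Prop :=
  fun y => exists z : int, y = zpowg x z.

Definition is_subgroup (G : groupType) (K : G -> Prop) : Prop :=
  [/\ K 1, (forall x y, K x -> K y -> K (x * y)) & (forall x, K x -> K x^-1)].

Definition is_normal (G : groupType) (K : G -> Prop) : Prop :=
  is_subgroup K /\ forall x g, K x -> K (x ^ g).

Definition finite_index (G : groupType) (K : G -> Prop) : Prop :=
  exists s : seq G, forall g, exists t, t \in s /\ K (t^-1 * g).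

Definition is_deg (G : groupType) (K : G -> Prop) (g : G) (m : nat) : Prop :=
  [/\ (0 < m)%N, K (g ^+ m) & forall k, (0 < k < m)%N -> ~ K (g ^+ k)].

Definition is_retraction (G : groupType) (K : G -> Prop) (c : G) (rho : G -> G) : Prop :=
  [/\ (forall x, K x -> cyc c (rho x)),
      (forall x y, K x -> K y -> rho (x * y) = rho x * rho y)
    & (forall y, cyc c y -> rho y = y)].

Definition is_hom (G : groupType) (H : finGroupType) (tau : G -> H) : Prop :=
  forall x y, tau (x * y) = (tau x * tau y)%g.

From HB Require Import structures.
From mathcomp Require Import all_boot all_algebra all_fingroup.
From mathcomp Require Import zify.
From Stdlib Require Import Classical ClassicalEpsilon.
Set Implicit Arguments. Unset Strict Implicit. Unset Printing Implicit Defensive.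
Local Open Scope group_scope.
Import GRing.Theory.

(* Write c = a^m.  Since rho is constant on K-conjugacy classes, the elements
   rho((b^mn)^g) c^-n, g in G, are finitely many nontrivial elements of <c>, so
   for a suitable k > 0 none of them lies in <c^k>.  The subgroup
   D = {x in K | rho x in <c^k>} has finite index, and G acts on its finitely
   many left cosets.  If the images of b and a^g coincide in this finite
   permutation group, then b (a^g)^-1 lies in the normal core of D, hence so
   does b^mn (a^g)^-mn; conjugating by g^-1 and applying rho puts
   rho((b^mn)^(g^-1)) c^-n in <c^k>, a contradiction. *)

Section IntegerPowers.
Variable G : groupType.
Implicit Types (c x y : G) (z : int).

Lemma zpowgS x z : zpowg x (z + 1)%R = zpowg x z * x.
Proof.
case: z => [n|[|n]].
- have -> : (Posz n + 1)%R = Posz n.+1 by lia.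
  by rewrite /= expgSr.
- by rewrite /= mulVg.
- have -> : (Negz n.+1 + 1)%R = Negz n by rewrite !NegzE; lia.
  by rewrite /= (expgS x n.+1) invgM mulgVK.
Qed.

Lemma zpowgB1 x z : zpowg x (z - 1)%R = zpowg x z * x^-1.
Proof. by rewrite -[in RHS](subrK 1%R z) zpowgS mulgK. Qed.

Lemma zpowgD x z1 z2 : zpowg x (z1 + z2)%R = zpowg x z1 * zpowg x z2.
Proof.
elim/int_rect: z2 => [|n IH|n IH]; first by rewrite addr0 mulg1.
- have -> : Posz n.+1 = (Posz n + 1)%R by lia.
  by rewrite addrA !zpowgS IH mulgA.
- have -> : (- (n.+1)%:Z = - n%:Z - 1)%R by lia.
  by rewrite addrA !zpowgB1 IH mulgA.
Qed.

Lemma zpowgN x z : zpowg x (- z)%R = (zpowg x z)^-1.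
Proof. by apply/esym/mulg1_eq; rewrite -zpowgD subrr. Qed.

Lemma zpowg_expg x (k : nat) z : zpowg (x ^+ k) z = zpowg x (z * k)%R.
Proof.
case: z => n.
- have -> : (Posz n * k)%R = Posz (n * k) by lia.
  by rewrite /= mulnC expgnA.
- have -> : (Negz n * k)%R = (- Posz (n.+1 * k))%R by rewrite NegzE; lia.
  by rewrite zpowgN /= mulnC expgnA.
Qed.

Lemma zpowg1n z : zpowg (1 : G) z = 1.
Proof. by case: z => n /=; rewrite expg1n ?invg1. Qed.

Lemma zpowg_eq1 c z :
  (forall N, (0 < N)%N -> c ^+ N != 1) -> zpowg c z = 1 -> z = 0%R.
Proof.
move=> c_inf; case: z => [[|n]|n] //= c_z; have := c_inf n.+1 isT.
  by rewrite c_z eqxx.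
by rewrite -[c ^+ n.+1]invgK c_z invg1 eqxx.
Qed.

Lemma cyc1 c : cyc c 1. Proof. by exists 0%R. Qed.

Lemma cycM c x y : cyc c x -> cyc c y -> cyc c (x * y).
Proof. by move=> [z1 ->] [z2 ->]; exists (z1 + z2)%R; rewrite zpowgD. Qed.

Lemma cycV c x : cyc c x -> cyc c x^-1.
Proof. by move=> [z ->]; exists (- z)%R; rewrite zpowgN. Qed.

Lemma cycX c (n : nat) : cyc c (c ^+ n). Proof. by exists n. Qed.

Lemma cyc_commute c x y : cyc c x -> cyc c y -> commute x y.
Proof. by move=> [z1 ->] [z2 ->]; rewrite /commute -!zpowgD addrC. Qed.

Lemma cyc_expg_rem c (k : nat) y : (0 < k)%N -> cyc c y ->
  exists2 r, (r < k)%N & cyc (c ^+ k) ((c ^+ r)^-1 * y).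
Proof.
move=> k_gt0 [z ->].
have k_neq0 : (k%:Z != 0)%R by lia.
have r_ge0 := modz_ge0 z k_neq0.
have r_lt : ((z %% k)%Z < k)%R by apply: ltz_pmod; lia.
exists (absz (z %% k)%Z); first by lia.
exists (z %/ k)%Z; rewrite zpowg_expg -[c ^+ _]/(zpowg c (Posz _)).
by rewrite -zpowgN -zpowgD; congr zpowg; move: (divz_eq z k); lia.
Qed.

(* In infinite order, c^z with z <> 0 escapes <c^k> as soon as k > |z|. *)
Lemma cyc_expg_notin_eventually c y :
  (forall N, (0 < N)%N -> c ^+ N != 1) -> cyc c y -> y <> 1 ->
  exists k0, forall k, (k0 <= k)%N -> ~ cyc (c ^+ k) y.
Proof.
move=> c_inf [z ->] z_neq1; exists (absz z).+1 => k k_big [q c_q].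
rewrite zpowg_expg in c_q.
have /(zpowg_eq1 c_inf) z_qk : zpowg c (z - q * k)%R = 1.
  by rewrite zpowgD zpowgN -c_q mulgV.
have {}z_qk : z = (q * k)%R by lia.
move: k_big; rewrite z_qk abszM absz_nat => k_big.
have /eqP : absz q = 0%N by nia.
by rewrite absz_eq0 => /eqP q0; apply: z_neq1; rewrite z_qk q0 mul0r.
Qed.

Lemma cyc_expg_avoid c (ys : seq G) :
  (forall y, y \in ys -> cyc c y /\ y <> 1) ->
  exists2 k, (0 < k)%N & forall y, y \in ys -> ~ cyc (c ^+ k) y.
Proof.
move=> ys_cyc.
have [[N N_gt0 cN] | c_fin] := classic (exists2 N, (0 < N)%N & c ^+ N = 1).
  exists N => // y /ys_cyc [_ y_neq1] [z y_z].
  by apply: y_neq1; rewrite y_z cN zpowg1n.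
have c_inf N : (0 < N)%N -> c ^+ N != 1.
  by move=> N_gt0; apply/eqP => cN; apply: c_fin; exists N.
suff [k0 k0_avoid] : exists k0, forall k, (k0 <= k)%N ->
    forall y, y \in ys -> ~ cyc (c ^+ k) y.
  by exists k0.+1 => //; apply: k0_avoid.
elim: ys ys_cyc => [|y ys IH] ys_cyc; first by exists 0.
have [k1 k1_avoid] :=
  IH (fun y' y'_ys => ys_cyc y' (mem_behead (s := y :: ys) y'_ys)).
have [y_cyc y_neq1] := ys_cyc y (mem_head y ys).
have [k2 k2_avoid] := cyc_expg_notin_eventually c_inf y_cyc y_neq1.
exists (maxn k1 k2) => k; rewrite geq_max => /andP[k1_k k2_k] y'.
by rewrite inE => /orP[/eqP -> | /k1_avoid]; [apply: k2_avoid | apply].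
Qed.

End IntegerPowers.

Section Homomorphisms.
Variables (G : groupType) (H : finGroupType) (tau : G -> H).
Hypothesis tau_hom : is_hom tau.

Lemma hom1 : tau 1 = 1.
Proof. by apply: (mulgI (tau 1)); rewrite -tau_hom !mulg1. Qed.

Lemma homV x : tau x^-1 = (tau x)^-1.
Proof. by apply/esym/mulg1_eq; rewrite -tau_hom mulgV hom1. Qed.

Lemma homJ x g : tau (x ^ g) = tau x ^ tau g.
Proof. by rewrite !conjgE !tau_hom homV. Qed.

End Homomorphisms.

Section Subgroups.
Variables (G : groupType) (D : G -> Prop).
Hypothesis D_subgroup : is_subgroup D.

Lemma subgroup1 : D 1. Proof. by case: D_subgroup. Qed.

Lemma subgroupM x y : D x -> D y -> D (x * y).
Proof. by case: D_subgroup => _ DM _; apply: DM. Qed.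

Lemma subgroupV x : D x -> D x^-1.
Proof. by case: D_subgroup => _ _ DV; apply: DV. Qed.

Lemma subgroupX x (j : nat) : D x -> D (x ^+ j).
Proof.
move=> Dx; elim: j => [|j IH]; first exact: subgroup1.
by rewrite expgS; apply: subgroupM.
Qed.

Lemma subgroup_divl_trans x y z : D (x^-1 * y) -> D (y^-1 * z) -> D (x^-1 * z).
Proof. by move=> Dxy Dyz; have := subgroupM Dxy Dyz; rewrite mulgA mulgK. Qed.

Lemma subgroup_divl_sym x y : D (x^-1 * y) -> D (y^-1 * x).
Proof. by move/subgroupV; rewrite invgM invgK. Qed.

Definition core (x : G) : Prop := forall u, D (x ^ u).

Lemma core_normal : is_normal core.
Proof.
split=> [|x g core_x u]; last by rewrite -conjgM.
split=> [u|x y core_x core_y u|x core_x u].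
- by rewrite conj1g; apply: subgroup1.
- by rewrite conjMg; apply: subgroupM.
- by rewrite conjVg; apply: subgroupV.
Qed.

End Subgroups.

Lemma normal_mulV_expg (G : groupType) (N : G -> Prop) x w (j : nat) :
  is_normal N -> N (x * w^-1) -> N (x ^+ j * (w ^+ j)^-1).
Proof.
move=> [N_subgroup N_normal] Nxw; elim: j => [|j IH].
  by rewrite !expg0 invg1 mulg1; apply: subgroup1.
have -> : x ^+ j.+1 * (w ^+ j.+1)^-1 =
          (x ^+ j * (w ^+ j)^-1) * (x * w^-1) ^ (w ^+ j)^-1.
  by rewrite conjgE invgK expgSr (expgSr w) invgM !mulgA mulgVK.
by apply: subgroupM => //; apply: N_normal.
Qed.

Definition asbool (P : Prop) : bool :=
  if excluded_middle_informative P then true else false.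

Lemma asboolP (P : Prop) : reflect P (asbool P).
Proof. by rewrite /asbool; case: excluded_middle_informative; constructor. Qed.

Section CosetAction.
Variables (G : groupType) (D : G -> Prop).
Hypotheses (D_subgroup : is_subgroup D) (D_finite : finite_index D).

Let D_cover : exists s : seq G, forall g, exists t, t \in s /\ D (t^-1 * g) :=
  D_finite.
Let s : seq G := proj1_sig (constructive_indefinite_description _ D_cover).
Let s_cover : forall g, exists t, t \in s /\ D (t^-1 * g) :=
  proj2_sig (constructive_indefinite_description _ D_cover).

Local Notation N := (size s).

(* The left coset x D is encoded by the first index of s representing it. *)
Definition coset_idx (x : G) : nat := find (fun t => asbool (D (t^-1 * x))) s.

Lemma coset_idx_has x : has (fun t => asbool (D (t^-1 * x))) s.
Proof.
by have [t [t_s Dtx]] := s_cover x; apply/hasP; exists t => //; apply/asboolP.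
Qed.

Lemma coset_idx_lt x : (coset_idx x < N)%N.
Proof. by rewrite /coset_idx -has_find coset_idx_has. Qed.

Lemma coset_idxP x : D ((nth 1 s (coset_idx x))^-1 * x).
Proof. exact/asboolP/(nth_find 1 (coset_idx_has x)). Qed.

Lemma coset_idx_eq x y : coset_idx x = coset_idx y <-> D (x^-1 * y).
Proof.
split=> [idx_xy | Dxy].
  have := coset_idxP x; rewrite idx_xy => /(subgroup_divl_sym D_subgroup) D_x.
  exact: (subgroup_divl_trans D_subgroup D_x (coset_idxP y)).
apply: eq_find => t; apply/asboolP/asboolP => Dt.
  exact: (subgroup_divl_trans D_subgroup Dt Dxy).
exact: (subgroup_divl_trans D_subgroup Dt (subgroup_divl_sym D_subgroup Dxy)).
Qed.

Definition coset_rep := {i : 'I_N | coset_idx (nth 1 s i) == i}.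

Definition coset_rep_of (x : G) : coset_rep :=
  exist _ (Ordinal (coset_idx_lt x))
          (introT eqP (proj2 (coset_idx_eq _ _) (coset_idxP x))).

Definition coset_elt (i : coset_rep) : G := nth 1 s (val (val i)).

Lemma coset_rep_of_eq x y : coset_rep_of x = coset_rep_of y <-> D (x^-1 * y).
Proof.
rewrite -coset_idx_eq; split=> [/(congr1 (fun i => val (val i))) //|].
by move=> idx_xy; apply/val_inj/val_inj.
Qed.

Lemma coset_rep_of_elt i : coset_rep_of (coset_elt i) = i.
Proof. by apply/val_inj/val_inj => /=; apply/eqP; case: i. Qed.

Definition coset_act (g : G) (i : coset_rep) : coset_rep :=
  coset_rep_of (g^-1 * coset_elt i).

Lemma coset_act_inj g : injective (coset_act g).
Proof.
move=> i j /coset_rep_of_eq; rewrite invgM -mulgA mulKg.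
by move/coset_rep_of_eq; rewrite !coset_rep_of_elt.
Qed.

Definition coset_perm (g : G) : {perm coset_rep} := perm (@coset_act_inj g).

Lemma coset_permM g h : coset_perm (g * h) = coset_perm g * coset_perm h.
Proof.
apply/permP => i; rewrite permM !permE; apply/coset_rep_of_eq.
move: (subgroup_divl_sym D_subgroup (coset_idxP (g^-1 * coset_elt i))).
by rewrite /coset_elt /= !invgM !invgK !mulgA mulgK.
Qed.

Lemma coset_perm1 : coset_perm 1 = 1.
Proof.
apply/permP => i.
by rewrite permE perm1 /coset_act invg1 mul1g coset_rep_of_elt.
Qed.

Lemma coset_perm_eq_core x y : coset_perm x = coset_perm y -> core D (x * y^-1).
Proof.
move=> xy_eq u; pose i := coset_rep_of u.
move/permP/(_ i): xy_eq; rewrite !permE /coset_act => /coset_rep_of_eq.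
rewrite invgM invgK -mulgA mulgA => D_xy.
have Du : D ((coset_elt i)^-1 * u) by exact: coset_idxP.
have := subgroupM D_subgroup (subgroupM D_subgroup
          (subgroup_divl_sym D_subgroup Du) D_xy) Du.
by rewrite !mulgA !mulgK conjgE !mulgA.
Qed.

Definition coset_perm_set := [set p | asbool (exists g, p = coset_perm g)].

Lemma coset_perm_group_set : group_set coset_perm_set.
Proof.
apply/group_setP; split.
  by rewrite inE; apply/asboolP; exists 1; rewrite coset_perm1.
move=> p q; rewrite !inE => /asboolP[g ->] /asboolP[h ->].
by apply/asboolP; exists (g * h); rewrite coset_permM.
Qed.

Definition coset_perm_group := Group coset_perm_group_set.

Lemma coset_perm_in g : coset_perm g \in coset_perm_group.
Proof. by rewrite inE; apply/asboolP; exists g. Qed.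

Lemma finite_index_quotient :
  exists (H : finGroupType) (tau : G -> H),
    [/\ is_hom tau, forall h, exists g, h = tau g
      & forall x y, tau x = tau y -> core D (x * y^-1)].
Proof.
exists (subg_of coset_perm_group).
exists (fun g => subg coset_perm_group (coset_perm g)).
split=> [x y | h | x y /(congr1 val)].
- by rewrite coset_permM subgM ?coset_perm_in.
- have := subgP h; rewrite inE => /asboolP[g g_h].
  by exists g; rewrite -g_h sgvalK.
- by rewrite !subgK ?coset_perm_in //; exact: coset_perm_eq_core.
Qed.

End CosetAction.

Section Retraction.
Variables (G : groupType) (K : G -> Prop) (c : G) (rho : G -> G).
Hypotheses (K_subgroup : is_subgroup K) (Kc : K c)
           (rho_retraction : is_retraction K c rho).

Lemma retraction_cyc x : K x -> cyc c (rho x).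
Proof. by case: rho_retraction => rhoC _ _; apply: rhoC. Qed.

Lemma retractionM x y : K x -> K y -> rho (x * y) = rho x * rho y.
Proof. by case: rho_retraction => _ rhoM _; apply: rhoM. Qed.

Lemma retraction_id y : cyc c y -> rho y = y.
Proof. by case: rho_retraction => _ _ rho_id; apply: rho_id. Qed.

Lemma retractionVX (j : nat) : rho (c ^+ j)^-1 = (c ^+ j)^-1.
Proof. exact/retraction_id/cycV/cycX. Qed.

Lemma retraction1 : rho 1 = 1.
Proof. exact/retraction_id/cyc1. Qed.

Lemma retractionV x : K x -> rho x^-1 = (rho x)^-1.
Proof.
move=> Kx; apply/esym/mulg1_eq.
by rewrite -retractionM ?mulgV ?retraction1 //; apply: subgroupV.
Qed.

(* rho lands in an abelian group, so it kills conjugation inside K. *)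
Lemma retractionJ x w : K x -> K w -> rho (x ^ w) = rho x.
Proof.
move=> Kx Kw; have Kw' : K w^-1 by apply: subgroupV.
have Kxw : K (x * w) by apply: subgroupM.
rewrite conjgE !retractionM // retractionV //.
by rewrite (cyc_commute (retraction_cyc Kx) (retraction_cyc Kw)) mulKg.
Qed.

Lemma retraction_conj_avoid x y : is_normal K -> finite_index K ->
  K x -> cyc c y -> (forall g, rho (x ^ g) <> y) ->
  exists2 k, (0 < k)%N & forall g, ~ cyc (c ^+ k) (rho (x ^ g) * y^-1).
Proof.
move=> [_ K_normal] [s s_cover] Kx y_cyc rho_neq.
pose ys := [seq rho (x ^ t) * y^-1 | t <- s].
have ys_cyc z : z \in ys -> cyc c z /\ z <> 1.
  case/mapP=> t _ ->; split.
    by apply: cycM; [apply/retraction_cyc/K_normal | apply: cycV].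
  by move/divg1_eq; apply: rho_neq.
have [k k_gt0 k_avoid] := cyc_expg_avoid ys_cyc.
exists k => // g; have [t [t_s Ktg]] := s_cover g.
rewrite -(mulKVg t g) conjgM retractionJ //; last exact: K_normal.
by apply: k_avoid; apply: map_f.
Qed.

Definition retraction_preim (k : nat) (x : G) : Prop :=
  K x /\ cyc (c ^+ k) (rho x).

Lemma retraction_preim_subgroup k : is_subgroup (retraction_preim k).
Proof.
split=> [|x y [Kx rho_x] [Ky rho_y]|x [Kx rho_x]].
- by split; [apply: subgroup1 | rewrite retraction1; apply: cyc1].
- by split; [apply: subgroupM | rewrite retractionM //; apply: cycM].
- by split; [apply: subgroupV | rewrite retractionV //; apply: cycV].
Qed.

(* The cosets t c^r D, for t a coset representative of K and r < k, cover G. *)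
Lemma retraction_preim_finite_index k :
  (0 < k)%N -> finite_index K -> finite_index (retraction_preim k).
Proof.
move=> k_gt0 [s s_cover].
exists [seq t * c ^+ r | t <- s, r <- iota 0 k] => g.
have [t [t_s Ktg]] := s_cover g.
have [r r_lt rho_r] := cyc_expg_rem k_gt0 (retraction_cyc Ktg).
exists (t * c ^+ r); split; first by apply: allpairs_f; rewrite ?mem_iota.
have Kcr := subgroupV K_subgroup (subgroupX K_subgroup r Kc).
rewrite invgM -mulgA; split; first exact: subgroupM.
by rewrite retractionM // retractionVX.
Qed.

End Retraction.

Theorem lemma2p1 (G : groupType) (a b : G) (K : G -> Prop) (m n : nat)
  (rho : G -> G) :
  is_normal K -> finite_index K ->
  is_deg K a m -> is_deg K b n ->
  is_retraction K (a ^+ m) rho ->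
  (forall g : G, rho ((b ^+ (m * n)) ^ g) <> a ^+ (m * n)) ->
  exists (H : finGroupType) (tau : G -> H),
    is_hom tau /\ forall h : H, tau b <> (tau a) ^ h.
Proof.
move=> K_normal K_finite [_ Kam _] [_ Kbn _] rho_retr rho_neq.
have [K_subgroup K_conj] := K_normal.
set c := a ^+ m; set B := b ^+ (m * n).
have acn : a ^+ (m * n) = c ^+ n by rewrite expgnA.
have KB : K B by rewrite /B mulnC expgnA; apply: subgroupX.
have rho_B_neq : forall g, rho (B ^ g) <> c ^+ n by rewrite -acn.
have [k k_gt0 avoid] := retraction_conj_avoid K_subgroup rho_retr K_normal
  K_finite KB (cycX c n) rho_B_neq.
have D_subgroup := retraction_preim_subgroup K_subgroup rho_retr k.
have [H [tau [tau_hom tau_onto tau_core]]] := finite_index_quotient D_subgroup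
  (retraction_preim_finite_index K_subgroup Kam rho_retr k_gt0 K_finite).
exists H, tau; split=> // h tau_b; have [g tau_g] := tau_onto h; subst h.
have /tau_core core_ba : tau b = tau (a ^ g) by rewrite tau_b homJ.
have /(_ g^-1) [_] := normal_mulV_expg (m * n) (core_normal D_subgroup) core_ba.
rewrite conjMg conjVg -conjXg conjgK -/B acn.
have KBg : K (B ^ g^-1) by apply: K_conj.
have Kcn : K (c ^+ n)^-1 := subgroupV K_subgroup (subgroupX K_subgroup n Kam).
rewrite (retractionM rho_retr KBg Kcn) (retractionVX rho_retr).
exact: avoid.
Qed.
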